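(* Let $N\ge 2$, $x_0<x_1<\dots<x_N$, $I=[x_0,x_N]$, $I_i=[x_{i-1},x_i)$ for $i<N$, $I_N=[x_{N-1},x_N]$. For $i=1,\dots,N$ let $L_i(x)=a_ix+b_i$ with $a_i=\frac{x_i-x_{i-1}}{x_N-x_0}$, $b_i=\frac{x_Nx_{i-1}-x_0x_i}{x_N-x_0}$, let $\alpha_i\in(-1,1)$, and let $q_i:I\to\mathbb{R}$ be Lipschitz continuous. Let $f$ be the unique bounded function on $I$ with $f(x)=\alpha_if(L_i^{-1}(x))+q_i(L_i^{-1}(x))$ for $x\in I_i$, $i=1,\dots,N$. Then the set of points of discontinuity of $f$ has Lebesgue measure zero; in particular $f$ is Riemann integrable on $I$. *)

From Stdlib Require Import Reals.
From mathcomp Require Import all_boot all_order all_algebra.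
From mathcomp Require Import all_classical all_reals all_analysis.
From mathcomp Require Import Rstruct Rstruct_topology.

Set Implicit Arguments. Unset Strict Implicit. Unset Printing Implicit Defensive.

Local Open Scope R_scope.

Definition Iint (x : nat -> R) (N : nat) (t : R) : Prop := x 0%nat <= t <= x N.

Definition Iseg (x : nat -> R) (N i : nat) (t : R) : Prop :=
  if (i < N)%N then x (i.-1) <= t < x i else x (i.-1) <= t <= x i.

Definition a_coef (x : nat -> R) (N i : nat) : R :=
  (x i - x (i.-1)) / (x N - x 0%nat).
Definition b_coef (x : nat -> R) (N i : nat) : R :=
  (x N * x (i.-1) - x 0%nat * x i) / (x N - x 0%nat).
Definition Lmap (x : nat -> R) (N i : nat) (t : R) : R :=
  a_coef x N i * t + b_coef x N i.
Definition Linv (x : nat -> R) (N i : nat) (t : R) : R :=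
  (t - b_coef x N i) / a_coef x N i.

Definition lipschitz_on_set (A : R -> Prop) (g : R -> R) : Prop :=
  exists K : R, forall s t, A s -> A t -> Rabs (g s - g t) <= K * Rabs (s - t).

Definition continuous_within_at (A : R -> Prop) (g : R -> R) (t : R) : Prop :=
  forall eps, 0 < eps -> exists delta, 0 < delta /\
    forall s, A s -> Rabs (s - t) < delta -> Rabs (g s - g t) < eps.

Definition discont_set (A : R -> Prop) (g : R -> R) : set R :=
  [set t | A t /\ ~ continuous_within_at A g t].

From Stdlib Require Import Reals Lra Lia.
From mathcomp Require Import all_boot all_order all_algebra.
From mathcomp Require Import all_classical all_reals all_analysis.
From mathcomp Require Import Rstruct Rstruct_topology zify.

(* The functional equation says that f is the fixed point of the operator
   T g (t) = alpha_i g (L_i^-1 t) + q_i (L_i^-1 t) on [I_i], a contraction of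
   ratio max |alpha_i| < 1 for the sup norm.  Hence the iterates T^n 0 converge
   uniformly to f.  Each iterate is continuous except at finitely many points:
   the interior nodes x_i and the images under the L_i of the exceptional points
   of the previous iterate.  A uniform limit is continuous wherever all the
   approximants are, so f is continuous off a countable set, which is
   Lebesgue-negligible; and a uniform limit of Riemann integrable functions
   (here bounded with finitely many discontinuities) is Riemann integrable. *)

Set Implicit Arguments.
Unset Strict Implicit.

Local Open Scope R_scope.

Section ContinuityWithin.
Implicit Types (A B : R -> Prop) (g h : R -> R).

Lemma continuous_within_at_subset A B g t : (forall s, B s -> A s) ->
  continuous_within_at A g t -> continuous_within_at B g t.
Proof.
move=> BA Hg eps eps_gt0; have [d [d_gt0 Hd]] := Hg eps eps_gt0.
by exists d; split=> // s /BA; apply: Hd.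
Qed.

Lemma continuous_within_at_lipschitz A g t :
  lipschitz_on_set A g -> A t -> continuous_within_at A g t.
Proof.
move=> [K HK] At eps eps_gt0.
have K1_gt0 : 0 < Rabs K + 1 by have := Rabs_pos K; lra.
exists (eps / (Rabs K + 1)); split; first exact: Rdiv_lt_0_compat.
move=> s As hst; apply: Rle_lt_trans (HK s t As At) _.
have epsE : eps / (Rabs K + 1) * (Rabs K + 1) = eps by field; lra.
have := Rle_abs K; have := Rabs_pos (s - t); nra.
Qed.

Lemma continuous_within_at_comp A B (phi g : R -> R) t :
  (forall s, A s -> B (phi s)) -> continuous_within_at A phi t ->
  continuous_within_at B g (phi t) -> continuous_within_at A (fun s => g (phi s)) t.
Proof.
move=> AB Hphi Hg eps eps_gt0.
have [d [d_gt0 Hd]] := Hg eps eps_gt0.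
have [e [e_gt0 He]] := Hphi d d_gt0.
by exists e; split=> // s As hst; apply: Hd; [exact: AB | exact: He].
Qed.

Lemma continuous_within_at_plus A g h t :
  continuous_within_at A g t -> continuous_within_at A h t ->
  continuous_within_at A (fun s => g s + h s) t.
Proof.
move=> Hg Hh eps eps_gt0.
have [d [d_gt0 Hd]] := Hg (eps / 2) ltac:(lra).
have [e [e_gt0 He]] := Hh (eps / 2) ltac:(lra).
exists (Rmin d e); split; first exact: Rmin_pos.
move=> s As hst.
have := Hd s As (Rlt_le_trans _ _ _ hst (Rmin_l d e)).
have := He s As (Rlt_le_trans _ _ _ hst (Rmin_r d e)).
have := Rabs_triang (g s - g t) (h s - h t).
by rewrite (_ : g s + h s - (g t + h t) = g s - g t + (h s - h t)); [lra | ring].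
Qed.

Lemma continuous_within_at_scal A c g t :
  continuous_within_at A g t -> continuous_within_at A (fun s => c * g s) t.
Proof.
move=> Hg eps eps_gt0.
have c1_gt0 : 0 < Rabs c + 1 by have := Rabs_pos c; lra.
have [d [d_gt0 Hd]] := Hg (eps / (Rabs c + 1)) (Rdiv_lt_0_compat _ _ eps_gt0 c1_gt0).
exists d; split=> // s As hst.
have := Hd s As hst; have := Rabs_pos (g s - g t).
have epsE : eps / (Rabs c + 1) * (Rabs c + 1) = eps by field; lra.
by rewrite -Rmult_minus_distr_l Rabs_mult; nra.
Qed.

Lemma continuous_within_at_local A B g h t : A t ->
  (exists d, 0 < d /\ forall s, A s -> Rabs (s - t) < d -> B s /\ g s = h s) ->
  continuous_within_at B h t -> continuous_within_at A g t.
Proof.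
move=> At [d [d_gt0 Hd]] Hh eps eps_gt0.
have [_ gt_ht] : B t /\ g t = h t by apply: Hd; rewrite // Rminus_diag Rabs_R0.
have [e [e_gt0 He]] := Hh eps eps_gt0.
exists (Rmin d e); split; first exact: Rmin_pos.
move=> s As hst.
have [Bs ->] := Hd s As (Rlt_le_trans _ _ _ hst (Rmin_l d e)).
by rewrite gt_ht; apply: He Bs (Rlt_le_trans _ _ _ hst (Rmin_r d e)).
Qed.

Lemma continuous_within_at_uniform_approx A f t : A t ->
  (forall eps, 0 < eps -> exists g,
     (forall s, A s -> Rabs (f s - g s) <= eps) /\ continuous_within_at A g t) ->
  continuous_within_at A f t.
Proof.
move=> At Happrox eps eps_gt0.
have [g [Hfg Hg]] := Happrox (eps / 3) ltac:(lra).
have [d [d_gt0 Hd]] := Hg (eps / 3) ltac:(lra).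
exists d; split=> // s As hst.
have := Hfg s As; have := Hfg t At; have := Hd s As hst.
have := Rabs_triang (f s - g s) (g s - g t + (g t - f t)).
have := Rabs_triang (g s - g t) (g t - f t).
rewrite (Rabs_minus_sym (g t)).
by rewrite (_ : f s - f t = f s - g s + (g s - g t + (g t - f t))); [lra | ring].
Qed.

End ContinuityWithin.

Lemma Riemann_integrable_step_approx f a b :
  (forall eps, 0 < eps -> exists (g : R -> R) (h : StepFun a b),
     inhabited (Riemann_integrable g a b) /\
     (forall t, Rmin a b <= t <= Rmax a b -> Rabs (f t - g t) <= h t) /\
     Rabs (RiemannInt_SF h) < eps) ->
  Riemann_integrable f a b.
Proof.
move=> Happrox [eps eps_gt0].
have eps2_gt0 : 0 < eps / 2 by lra.
have [g Hg] := cid (Happrox _ eps2_gt0).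
have [h [Ig [Hfg Hh]]] := cid Hg.
have [Ig' _] : {_ : Riemann_integrable g a b | True}.
  by apply: cid; case: Ig => Ig; exists Ig.
have [phi [psi [Hphi Hpsi]]] := Ig' (mkposreal _ eps2_gt0).
exists phi, (mkStepFun (StepFun_P28 1 h psi)); split.
- move=> t Ht /=; rewrite Rmult_1_l.
  rewrite (_ : f t - phi t = f t - g t + (g t - phi t)); last by ring.
  apply: Rle_trans (Rabs_triang _ _) _.
  exact: Rplus_le_compat (Hfg t Ht) (Hphi t Ht).
- rewrite StepFun_P30 Rmult_1_l; apply: Rle_lt_trans (Rabs_triang _ _) _.
  by move: Hpsi => /=; lra.
Qed.

Lemma Riemann_integrable_uniform_approx f a b : a <= b ->
  (forall eps, 0 < eps -> exists g, inhabited (Riemann_integrable g a b) /\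
     forall t, a <= t <= b -> Rabs (f t - g t) <= eps) ->
  Riemann_integrable f a b.
Proof.
move=> hab Happrox; apply: Riemann_integrable_step_approx => eps eps_gt0.
set e := eps / (2 * (b - a + 1)).
have e_gt0 : 0 < e by apply: Rdiv_lt_0_compat; lra.
have epsE : e * (2 * (b - a + 1)) = eps by rewrite /e; field; lra.
have [g [Ig Hfg]] := Happrox e e_gt0.
exists g, (mkStepFun (StepFun_P4 a b e)); split=> //; split.
- by rewrite Rmin_left // Rmax_right // => t /Hfg.
- by rewrite StepFun_P18 Rabs_right; nra.
Qed.

Definition clamp (c d t : R) := Rmax c (Rmin d t).

Lemma clamp_in c d t : c <= d -> c <= clamp c d t <= d.
Proof. by move=> ?; rewrite /clamp /Rmax /Rmin; repeat destruct Rle_dec; lra. Qed.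

Lemma clamp_id c d t : c <= t <= d -> clamp c d t = t.
Proof. by move=> ?; rewrite /clamp /Rmax /Rmin; repeat destruct Rle_dec; lra. Qed.

Lemma clamp_lipschitz c d s t : c <= d -> Rabs (clamp c d s - clamp c d t) <= Rabs (s - t).
Proof.
move=> hcd; rewrite /clamp /Rmax /Rmin /Rabs.
by repeat destruct Rle_dec; repeat destruct Rcase_abs; lra.
Qed.

Lemma continuity_pt_clamp g a b c d y : a <= c -> c <= d -> d <= b ->
  (forall t, c <= t <= d -> continuous_within_at (fun s => a <= s <= b) g t) ->
  continuity_pt (fun t => g (clamp c d t)) y.
Proof.
move=> hac hcd hdb Hg eps eps_gt0.
have [del [del_gt0 Hdel]] := Hg _ (clamp_in y hcd) eps eps_gt0.
exists del; split=> // z [_ hz]; apply: Hdel.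
- by have := clamp_in z hcd; lra.
- exact: Rle_lt_trans (clamp_lipschitz _ _ hcd) hz.
Qed.

Definition outer_step (v c d t : R) : R :=
  if Rle_dec t c then v else if Rle_dec d t then v else 0.

Lemma outer_step_StepFun v a b c d : a <= c -> c <= d -> d <= b ->
  IsStepFun (outer_step v c d) a b.
Proof.
move=> hac hcd hdb; exists [:: a; c; d; b], [:: v; 0; v].
repeat split=> /=.
- by move=> [|[|[|i]]] /= hi; lra || lia.
- by rewrite Rmin_left; lra.
- by rewrite Rmax_right; lra.
- move=> [|[|[|i]]] /= hi t [ht1 ht2]; rewrite /outer_step;
    do 2?case: Rle_dec => //=; lra || lia.
Defined.

Lemma Riemann_integrable_cont_interior g a b M : a <= b ->
  (forall t, a <= t <= b -> Rabs (g t) <= M) ->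
  (forall t, a < t < b -> continuous_within_at (fun s => a <= s <= b) g t) ->
  Riemann_integrable g a b.
Proof.
move=> hab Hbound Hcont.
have [hlt|<-] := Rle_lt_or_eq_dec _ _ hab; last exact: RiemannInt_P7.
have M_ge0 : 0 <= M by apply: Rle_trans (Rabs_pos _) (Hbound a _); lra.
apply: Riemann_integrable_step_approx => eps eps_gt0.
(* Clamping to [a + del, b - del] gives a continuous function that differs from
   g only within del of the endpoints, and there by at most 2 M. *)
set del := Rmin ((b - a) / 2) (eps / (8 * M + 8)).
have del_le1 : del <= (b - a) / 2 by apply: Rmin_l.
have del_le2 : del * (8 * M + 8) <= eps.
  have : del <= eps / (8 * M + 8) by apply: Rmin_r.
  have : eps / (8 * M + 8) * (8 * M + 8) = eps by field; lra.
  nra.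
have del_gt0 : 0 < del.
  by apply: Rmin_pos; [lra | apply: Rdiv_lt_0_compat; lra].
set c := a + del; set d := b - del.
have hac : a <= c by rewrite /c; lra.
have hcd : c <= d by rewrite /c /d; lra.
have hdb : d <= b by rewrite /d; lra.
exists (fun t => g (clamp c d t)), (mkStepFun (outer_step_StepFun (2 * M) hac hcd hdb)).
split; [|split].
- constructor; apply: continuity_implies_RiemannInt => // y _.
  apply: (continuity_pt_clamp (a := a) (b := b)) => // t ht.
  by apply: Hcont; rewrite /c /d in ht; lra.
- move=> t; rewrite Rmin_left ?Rmax_right; try lra.
  move=> Ht /=; rewrite /outer_step.
  have hcl := clamp_in t hcd.
  have gap : Rabs (g t - g (clamp c d t)) <= 2 * M.
    apply: Rle_trans (Rabs_triang _ _) _; rewrite Rabs_Ropp.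
    by have := Hbound t Ht; have := Hbound (clamp c d t) ltac:(lra); lra.
  do 2?case: Rle_dec => ? //=.
  by rewrite clamp_id ?Rminus_diag ?Rabs_R0; lra.
- rewrite /RiemannInt_SF; case: Rle_dec => [_ /=|]; last lra.
  by rewrite Rabs_right /c /d; nra.
Qed.

Lemma Riemann_integrable_cont_except (B : list R) g a b M : a <= b ->
  (forall t, a <= t <= b -> Rabs (g t) <= M) ->
  (forall t, a < t < b -> ~ List.In t B ->
     continuous_within_at (fun s => a <= s <= b) g t) ->
  Riemann_integrable g a b.
Proof.
elim: B a b => [|p B IH] a b hab Hbound Hcont.
  by apply: (Riemann_integrable_cont_interior (M := M)) => // t /Hcont; apply.
have Hsub a' b' : a <= a' -> b' <= b -> a' <= b' -> ~ (a' < p < b') ->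
    Riemann_integrable g a' b'.
  move=> ha hb hab' hp; apply: IH hab' _ _ => [t ht|t ht tB]; first by apply: Hbound; lra.
  apply: (continuous_within_at_subset (A := fun s => a <= s <= b)); first by move=> s; lra.
  by apply: Hcont; [lra | case=> [E|//]; apply: hp; rewrite E].
have [hp|hp] := pselect (a < p < b); last by apply: Hsub; lra.
by apply: (RiemannInt_P24 (b := p)); apply: Hsub; lra.
Qed.

Section CountableNegligible.
Local Open Scope classical_set_scope.

Lemma finite_set_In (l : list R) : finite_set [set t | List.In t l].
Proof.
elim: l => [|a l IH].
  have -> : [set t : R | List.In t nil] = set0 by apply/seteqP; split=> t.
  exact: finite_set0.
rewrite (_ : [set t | List.In t (a :: l)] = [set a] `|` [set t | List.In t l]).
  by rewrite finite_setU; split=> //; exact: finite_set1.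
by apply/seteqP; split=> t /= [|]; by [left | right].
Qed.

Lemma negligible_bigcup_In (B : nat -> list R) :
  (@lebesgue_measure R).-negligible (\bigcup_n [set t | List.In t (B n)]).
Proof.
have cB : countable (\bigcup_n [set t | List.In t (B n)]).
  by apply: bigcup_countable => // n _; apply/finite_set_countable/finite_set_In.
apply/negligibleP; last exact: countable_lebesgue_measure0.
exact: (countable_measurable (T := measurableTypeR R)).
Qed.

End CountableNegligible.

Section SelfAffine.
Variables (N : nat) (x alpha : nat -> R) (q : nat -> R -> R) (f : R -> R) (M : R).
Hypothesis N_ge2 : (2 <= N)%N.
Hypothesis x_incr : forall i, (i < N)%N -> x i < x i.+1.
Hypothesis alpha_bound : forall i, (1 <= i <= N)%N -> -1 < alpha i < 1.
Hypothesis q_lipschitz : forall i, (1 <= i <= N)%N -> lipschitz_on_set (Iint x N) (q i).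
Hypothesis f_bound : forall t, Iint x N t -> Rabs (f t) <= M.
Hypothesis f_eq : forall i t, (1 <= i <= N)%N -> Iseg x N i t ->
  f t = alpha i * f (Linv x N i t) + q i (Linv x N i t).

Lemma x_lt i j : (i < j)%N -> (j <= N)%N -> x i < x j.
Proof.
elim: j => [|j IH] ij jN; first by lia.
have [->|ji] := eqVneq i j; first by apply: x_incr; lia.
by apply: Rlt_trans (IH _ _) (x_incr _); lia.
Qed.

Lemma x_le i j : (i <= j)%N -> (j <= N)%N -> x i <= x j.
Proof.
move=> ij jN; have [->|ji] := eqVneq i j; first exact: Rle_refl.
by apply: Rlt_le; apply: x_lt; lia.
Qed.

Lemma x_span_gt0 : 0 < x N - x 0%nat.
Proof. by have := @x_lt 0 N ltac:(lia) ltac:(lia); lra. Qed.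

Lemma x_step_gt0 i : (1 <= i <= N)%N -> 0 < x i - x i.-1.
Proof. by move=> hi; have := @x_lt i.-1 i ltac:(lia) ltac:(lia); lra. Qed.

Lemma Linv_affine i t : (1 <= i <= N)%N ->
  Linv x N i t = x 0%nat + (t - x i.-1) / (x i - x i.-1) * (x N - x 0%nat).
Proof.
move=> hi; have := x_step_gt0 hi; have := x_span_gt0.
by rewrite /Linv /a_coef /b_coef => *; field; lra.
Qed.

Lemma LinvK i t : (1 <= i <= N)%N -> Lmap x N i (Linv x N i t) = t.
Proof.
move=> hi; have := x_step_gt0 hi; have := x_span_gt0.
by rewrite /Lmap /Linv /a_coef /b_coef => *; field; lra.
Qed.

Lemma Linv_lipschitz i (A : R -> Prop) : (1 <= i <= N)%N -> lipschitz_on_set A (Linv x N i).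
Proof.
move=> hi; exists ((x N - x 0%nat) / (x i - x i.-1)) => s t _ _.
have := x_step_gt0 hi; have := x_span_gt0 => *.
rewrite !Linv_affine // (_ : _ - _ = (s - t) * ((x N - x 0%nat) / (x i - x i.-1))).
  by rewrite Rabs_mult Rmult_comm Rabs_right; [lra | apply/Rle_ge/Rlt_le/Rdiv_lt_0_compat].
by field; lra.
Qed.

Lemma Linv_Iint i t : (1 <= i <= N)%N -> x i.-1 <= t <= x i -> Iint x N (Linv x N i t).
Proof.
move=> hi ht; rewrite Linv_affine //.
have := x_step_gt0 hi; have := x_span_gt0 => h0 h1.
set r := (t - x i.-1) / (x i - x i.-1).
have r_ge0 : 0 <= r by apply: Rmult_le_pos; [lra | apply/Rlt_le/Rinv_0_lt_compat].
have r_le1 : r <= 1.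
  apply: (Rmult_le_reg_r (x i - x i.-1)) => //.
  by rewrite /r /Rdiv Rmult_assoc Rinv_l; lra.
by rewrite /Iint; nra.
Qed.

Lemma Iseg_closed i t : Iseg x N i t -> x i.-1 <= t <= x i.
Proof. by rewrite /Iseg; case: ifP => _; lra. Qed.

Lemma Iseg_cover t : Iint x N t -> exists2 i, (1 <= i <= N)%N & Iseg x N i t.
Proof.
move=> [t0 tN]; rewrite /Iseg.
have [tlt|tge] := Rlt_dec t (x N.-1); last first.
  by exists N; rewrite ?ltnn; lra || lia.
suff [i hi hit] : exists2 i, (1 <= i <= N.-1)%N & x i.-1 <= t < x i.
  by exists i; [lia | rewrite (_ : (i < N)%N = true) //; lia].
elim: N.-1 tlt => [|k IH] tk; first lra.
have [tlt|tge] := Rlt_dec t (x k); last by exists k.+1 => //=; lra.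
case: k IH tk tlt => [|k] IH tk tlt; first lra.
by have [i ? ?] := IH tlt; exists i => //; lia.
Qed.

Lemma Iseg_uniq i j t : (1 <= i <= N)%N -> (1 <= j <= N)%N ->
  Iseg x N i t -> Iseg x N j t -> i = j.
Proof.
wlog ij : i j / (i <= j)%N.
  by move=> H hi hj si sj; case/orP: (leq_total i j) => ?; [|symmetry]; apply: H.
move=> hi hj si sj; apply/eqP; rewrite eqn_leq ij /=; apply: contraT; rewrite -ltnNge => ji.
move: si; rewrite /Iseg (_ : (i < N)%N = true); last by lia.
have := Iseg_closed sj; have := @x_le i j.-1 ltac:(lia) ltac:(lia); lra.
Qed.

Definition seg_index (t : R) : nat := xget 0%nat (fun i => (1 <= i <= N)%N /\ Iseg x N i t).

Lemma seg_indexE i t : (1 <= i <= N)%N -> Iseg x N i t -> seg_index t = i.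
Proof.
move=> hi hit.
have [hj hjt] := @xgetI _ 0%nat (fun j => (1 <= j <= N)%N /\ Iseg x N j t) i (conj hi hit).
exact: Iseg_uniq hj hi hjt hit.
Qed.

Fixpoint iterate (n : nat) (t : R) : R :=
  if n is m.+1 then
    let i := seg_index t in alpha i * iterate m (Linv x N i t) + q i (Linv x N i t)
  else 0.

Fixpoint alpha_max (k : nat) : R :=
  if k is k'.+1 then Rmax (Rabs (alpha k)) (alpha_max k') else 0.

Lemma alpha_max_ge0 k : 0 <= alpha_max k.
Proof. by elim: k => [|k IH] /=; [lra | apply: Rle_trans IH (Rmax_r _ _)]. Qed.

Lemma le_alpha_max k i : (1 <= i <= k)%N -> Rabs (alpha i) <= alpha_max k.
Proof.
elim: k => [|k IH] hi /=; first by lia.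
have [->|ik] := eqVneq i k.+1; first exact: Rmax_l.
by apply: Rle_trans (IH _) (Rmax_r _ _); lia.
Qed.

Lemma alpha_max_lt1 k : (k <= N)%N -> alpha_max k < 1.
Proof.
elim: k => [|k IH] kN /=; first lra.
apply: Rmax_lub_lt; last by apply: IH; lia.
by have := alpha_bound (i := k.+1) ltac:(lia); rewrite /Rabs; case: Rcase_abs; lra.
Qed.

Lemma M_ge0 : 0 <= M.
Proof.
apply: Rle_trans (Rabs_pos _) (f_bound (t := x 0%nat) _).
by have := x_span_gt0; rewrite /Iint; lra.
Qed.

Lemma iterate_error n t : Iint x N t -> Rabs (f t - iterate n t) <= alpha_max N ^ n * M.
Proof.
elim: n t => [|n IH] t It /=; first by rewrite Rminus_0_r Rmult_1_l; apply: f_bound.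
have [i hi hit] := Iseg_cover It.
rewrite (seg_indexE hi hit) (f_eq hi hit).
rewrite (_ : _ - _ = alpha i * (f (Linv x N i t) - iterate n (Linv x N i t))); last by ring.
rewrite Rabs_mult Rmult_assoc.
apply: Rmult_le_compat; try exact: Rabs_pos; first exact: le_alpha_max.
exact/IH/Linv_Iint/Iseg_closed.
Qed.

Lemma iterate_close eps : 0 < eps ->
  exists n, forall t, Iint x N t -> Rabs (f t - iterate n t) <= eps.
Proof.
move=> eps_gt0; have A_ge0 := alpha_max_ge0 N; have M0 := M_ge0.
have [n Hn] := pow_lt_1_zero (alpha_max N)
  ltac:(rewrite Rabs_right; [exact: alpha_max_lt1 | lra]) (eps / (M + 1))
  ltac:(apply: Rdiv_lt_0_compat; lra).
have := Hn n (le_n n); rewrite Rabs_right; last exact/Rle_ge/pow_le.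
have epsE : eps / (M + 1) * (M + 1) = eps by field; lra.
move=> /(Rmult_lt_compat_r (M + 1)) small; exists n => t It.
have := iterate_error n It; have := small ltac:(lra); have := pow_le _ n A_ge0; nra.
Qed.

Lemma iterate_bounded n t : Iint x N t -> Rabs (iterate n t) <= 2 * M.
Proof.
move=> It; have := iterate_error n It; have := f_bound It.
have : alpha_max N ^ n <= 1.
  rewrite -(pow1 n); apply: pow_incr; split; first exact: alpha_max_ge0.
  by apply/Rlt_le/alpha_max_lt1.
have := Rabs_triang (f t) (- (f t - iterate n t)); rewrite Rabs_Ropp.
by rewrite (_ : f t + - _ = iterate n t); [have := M_ge0; nra | ring].
Qed.

(* The points where [iterate n] may fail to be continuous. *)
Fixpoint breakpoints (n : nat) : list R :=
  if n is m.+1 then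
    List.map x (List.seq 1 N.-1) ++
    List.flat_map (fun i => List.map (Lmap x N i) (breakpoints m)) (List.seq 1 N)
  else nil.

Lemma Iseg_nbhd i t : (1 <= i <= N)%N -> Iseg x N i t -> ((1 < i)%N -> t <> x i.-1) ->
  exists d, 0 < d /\ forall s, Iint x N s -> Rabs (s - t) < d -> Iseg x N i s.
Proof.
move=> hi hit tL; have [t_ge t_le] := Iseg_closed hit.
set d1 := if (1 < i)%N then t - x i.-1 else 1.
set d2 := if (i < N)%N then x i - t else 1.
have d1_gt0 : 0 < d1 by rewrite /d1; case: ifP => [/tL|_]; lra.
have d2_gt0 : 0 < d2 by move: hit; rewrite /d2 /Iseg; case: ifP; lra.
exists (Rmin d1 d2); split=> [|s [s0 sN] hst]; first exact: Rmin_pos.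
have [_ hs1] := Rabs_def2 _ _ (Rlt_le_trans _ _ _ hst (Rmin_l d1 d2)).
have [hs2 _] := Rabs_def2 _ _ (Rlt_le_trans _ _ _ hst (Rmin_r d1 d2)).
have s_ge : x i.-1 <= s.
  move: hs1; rewrite /d1; case: ifP => [_|i1]; first lra.
  by rewrite (_ : i.-1 = 0%nat); [lra | lia].
rewrite /Iseg; case: ifP => iN; split=> //; first by move: hs2; rewrite /d2 iN; lra.
by rewrite (_ : i = N) //; lia.
Qed.

Lemma iterate_continuous n t : Iint x N t -> ~ List.In t (breakpoints n) ->
  continuous_within_at (Iint x N) (iterate n) t.
Proof.
elim: n t => [|n IH] t It tB.
  by move=> eps eps_gt0; exists 1; split=> [|s _ _] /=; rewrite ?Rminus_diag ?Rabs_R0; lra.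
have [i hi hit] := Iseg_cover It.
have tL : (1 < i)%N -> t <> x i.-1.
  move=> i1 tE; apply: tB; apply/List.in_or_app; left.
  by rewrite tE; apply/List.in_map/List.in_seq; lia.
have uB : ~ List.In (Linv x N i t) (breakpoints n).
  move=> uB; apply: tB; apply/List.in_or_app; right.
  apply/List.in_flat_map; exists i; split; first by apply/List.in_seq; lia.
  by rewrite -(LinvK t hi); apply: List.in_map.
have LinvI s : Iseg x N i s -> Iint x N (Linv x N i s).
  by move/Iseg_closed; apply: Linv_Iint.
have Linv_cont := continuous_within_at_lipschitz (Linv_lipschitz (Iseg x N i) hi) hit.
apply: (continuous_within_at_local (B := Iseg x N i)
  (h := fun s => alpha i * iterate n (Linv x N i s) + q i (Linv x N i s))) => //.
  have [d [d_gt0 Hd]] := Iseg_nbhd hi hit tL.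
  exists d; split=> // s Is /(Hd s Is) sit; split=> //=.
  by rewrite (seg_indexE hi sit).
apply: continuous_within_at_plus.
  apply/continuous_within_at_scal/(continuous_within_at_comp LinvI Linv_cont).
  exact: IH (LinvI _ hit) uB.
apply: (continuous_within_at_comp LinvI Linv_cont).
exact: continuous_within_at_lipschitz (q_lipschitz hi) (LinvI _ hit).
Qed.

Lemma f_continuous_off_breakpoints t : Iint x N t ->
  (forall n, ~ List.In t (breakpoints n)) -> continuous_within_at (Iint x N) f t.
Proof.
move=> It tB; apply: continuous_within_at_uniform_approx => // eps /iterate_close [n Hn].
by exists (iterate n); split; [exact: Hn | exact: iterate_continuous].
Qed.

Lemma f_Riemann_integrable : Riemann_integrable f (x 0%nat) (x N).
Proof.
have x0N : x 0%nat <= x N by have := x_span_gt0; lra.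
apply: Riemann_integrable_uniform_approx => // eps /iterate_close [n Hn].
exists (iterate n); split=> //; constructor.
apply: (Riemann_integrable_cont_except (B := breakpoints n) (M := 2 * M)) => //.
  by move=> t; apply: iterate_bounded.
by move=> t ht; apply: iterate_continuous; rewrite /Iint; lra.
Qed.

Lemma f_discont_negligible :
  (@lebesgue_measure R).-negligible (discont_set (Iint x N) f).
Proof.
apply: negligibleS (negligible_bigcup_In breakpoints) => t [It /= tC].
apply: contrapT => tB; apply: tC; apply: f_continuous_off_breakpoints => // n tn.
by apply: tB; exists n.
Qed.

End SelfAffine.

Theorem mainTheorem6 (N : nat) (x : nat -> R) (alpha : nat -> R)
  (q : nat -> R -> R) (f : R -> R) :
  (2 <= N)%N ->
  (forall i, (i < N)%N -> x i < x i.+1) ->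
  (forall i, (1 <= i <= N)%N -> -1 < alpha i < 1) ->
  (forall i, (1 <= i <= N)%N -> lipschitz_on_set (Iint x N) (q i)) ->
  (exists M, forall t, Iint x N t -> Rabs (f t) <= M) ->
  (forall i t, (1 <= i <= N)%N -> Iseg x N i t ->
     f t = alpha i * f (Linv x N i t) + q i (Linv x N i t)) ->
  (@lebesgue_measure R).-negligible (discont_set (Iint x N) f) /\
  inhabited (Riemann_integrable f (x 0%nat) (x N)).
Proof.
move=> N_ge2 x_incr alpha_bound q_lipschitz [M f_bound] f_eq; split.
  exact: f_discont_negligible N_ge2 x_incr alpha_bound q_lipschitz f_bound f_eq.
by constructor; exact: f_Riemann_integrable N_ge2 x_incr alpha_bound q_lipschitz f_bound f_eq.
Qed.
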